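(* Let $P,Q,R_0,R_1$ be integers with $PQ\ne0$, $\Delta:=P^2-4Q\neq0$, $|R_0|+|R_1|>0$, $\gcd(P,Q)=\gcd(R_1,Q)=1$, such that $\alpha/\beta$ is not a root of unity, where $\alpha,\beta$ are the roots of $x^2-Px+Q$; let $U_n=(\alpha^n-\beta^n)/(\alpha-\beta)$. Let $n\ge k$ be positive integers. Then for every $j\in\{k,k+1,\dots,n\}$, \[\prod_{\substack{k\le i\le n\\ i\ne j}}\left(R_0Q\left(\frac{U_{j-1}}{U_j}-\frac{U_{i-1}}{U_i}\right)\right)=(-1)^{n-j}R_0^{\,n-k}Q^{f(j,k,n)}\frac{[j-k]_{\boldsymbol U}!\,[n-j]_{\boldsymbol U}!}{U_j^{\,n-k-1}\,(U_kU_{k+1}\cdots U_n)}.\] Furthermore, if $k\ge2$, then for every $j\in\{k,\dots,n\}$, \[\prod_{\substack{k\le i\le n\\ i\ne j}}\left(R_1\left(\frac{U_i}{U_{i-1}}-\frac{U_j}{U_{j-1}}\right)\right)=(-1)^{n-j}R_1^{\,n-k}Q^{f(j,k,n)-(n-k)}\frac{[j-k]_{\boldsymbol U}!\,[n-j]_{\boldsymbol U}!}{U_{j-1}^{\,n-k-1}\,(U_{k-1}U_k\cdots U_{n-1})}.\]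
   Context: $U_0=0,U_1=1,U_{n+2}=PU_{n+1}-QU_n$; $[j]_{\boldsymbol U}!:=U_1\cdots U_j$ with $[0]_{\boldsymbol U}!=1$. For $k\le j\le n$, $f(j,k,n):=\sum_{k\le i\le n,\ i\ne j}\min(i,j)$. *)

From mathcomp Require Import all_boot all_order all_algebra all_field.
Set Implicit Arguments. Unset Strict Implicit. Unset Printing Implicit Defensive.
Import Order.TTheory GRing.Theory Num.Theory.
Local Open Scope ring_scope.

Fixpoint lucasU (P Q : int) (n : nat) : int :=
  match n with
  | 0%N => 0
  | 1%N => 1
  | (m.+1 as n').+1 => P * lucasU P Q n' - Q * lucasU P Q m
  end.

Definition lucasFact (P Q : int) (j : nat) : int :=
  \prod_(1 <= i < j.+1) lucasU P Q i.

Definition fjkn (j k n : nat) : nat :=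
  (\sum_(k <= i < n.+1 | i != j) minn i j)%N.

Definition charpoly2 (P Q : int) : {poly algC} :=
  'X^2 - (P%:~R) *: 'X + (Q%:~R)%:P.

From mathcomp Require Import all_boot all_order all_algebra all_field.
From mathcomp Require Import zify ring.

Set Implicit Arguments.
Unset Strict Implicit.
Unset Printing Implicit Defensive.

Import Order.TTheory GRing.Theory Num.Theory.
Local Open Scope ring_scope.

(* Every factor is governed by the d'Ocagne-type identity
   U_{j-1} U_i - U_{i-1} U_j = (-1)^[j < i] Q^(min(i,j)-1) U_|i-j|.
   Over i <> j the signs contribute (-1)^(n-j), the powers of Q add up to
   f(j,k,n) (up to the shift n-k in the second product), and the factors
   U_|i-j| for i < j and for i > j are the U-factorials [j-k]! and [n-j]!.
   All U_i with i > 0 are nonzero: U_n = 0 would force alpha^n = beta^n. *)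

Section LucasIdentities.
Variables P Q : int.
Local Notation U := (lucasU P Q).

Lemma lucasUSS n : U n.+2 = P * U n.+1 - Q * U n.
Proof. by []. Qed.

Lemma lucasU_addn_cross b m :
  U (b + m) * U b.+1 - U (b + m).+1 * U b = Q ^+ b * U m.
Proof.
elim: b => [|b IHb]; first by rewrite add0n expr0 /=; ring.
by rewrite addSn !lucasUSS exprS -mulrA -IHb; ring.
Qed.

Lemma lucasU_cross i j : (0 < i)%N -> (0 < j)%N ->
  U j.-1 * U i - U i.-1 * U j
    = (-1) ^+ (j < i) * Q ^+ (minn i j).-1 * U `|i - j|%N.
Proof.
move=> i_gt0 j_gt0; case: (leqP i j) => [le_ij | lt_ji].
- have := lucasU_addn_cross i.-1 (j - i).
  have -> : (i.-1 + (j - i) = j.-1)%N by lia.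
  by rewrite !prednK // distnEr // expr0 mul1r => <-; ring.
- have := lucasU_addn_cross j.-1 (i - j).
  have -> : (j.-1 + (i - j) = i.-1)%N by lia.
  by rewrite !prednK // distnEl 1?ltnW // expr1 -mulrA => <-; ring.
Qed.

Lemma expr_lucasU {R : comNzRingType} {a : R} :
  a ^+ 2 = P%:~R * a - Q%:~R ->
  forall n, a ^+ n.+1 = (U n.+1)%:~R * a - Q%:~R * (U n)%:~R.
Proof.
move=> a2 n.
suff [] : a ^+ n.+1 = (U n.+1)%:~R * a - Q%:~R * (U n)%:~R /\
          a ^+ n.+2 = (U n.+2)%:~R * a - Q%:~R * (U n.+1)%:~R by [].
elim: n => [|n [_ IHn]]; first by split; rewrite ?a2 /= ?expr1; ring.
split=> //; rewrite exprS IHn lucasUSS rmorphB /= !rmorphM /= mulrBr mulrA.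
by rewrite (mulrC a) -mulrA -expr2 a2; ring.
Qed.

Lemma root_charpoly2 (a : algC) :
  root (charpoly2 P Q) a = (a ^+ 2 == P%:~R * a - Q%:~R).
Proof. by rewrite /root /charpoly2 !hornerE addr_eq0 subr_eq [- _ + _]addrC. Qed.

Lemma charpoly2_distinct_roots : P ^+ 2 - 4 * Q != 0 ->
  exists a b : algC, [/\ a != b, root (charpoly2 P Q) a & root (charpoly2 P Q) b].
Proof.
move=> D_neq0; set s := sqrtC ((P ^+ 2 - 4 * Q)%:~R : algC).
have s2 : s ^+ 2 = P%:~R ^+ 2 - 4 * Q%:~R.
  by rewrite sqrtCK rmorphB rmorphXn /= rmorphM.
have s_neq0 : s != 0 by rewrite sqrtC_eq0 intr_eq0.
have root_half (e : algC) : e ^+ 2 = s ^+ 2 -> root (charpoly2 P Q) ((P%:~R + e) / 2).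
  move=> e2; rewrite root_charpoly2 -subr_eq0; apply/eqP.
  transitivity ((e ^+ 2 - s ^+ 2) / 4); first by rewrite s2; field.
  by rewrite e2 subrr mul0r.
exists ((P%:~R + s) / 2), ((P%:~R - s) / 2); split; rewrite ?root_half ?sqrrN //.
apply: contra s_neq0 => /eqP ab.
have -> : s = (P%:~R + s) / 2 - (P%:~R - s) / 2 by field.
by rewrite ab subrr.
Qed.

Lemma lucasU_neq0 n : Q != 0 -> P ^+ 2 - 4 * Q != 0 ->
  (forall alpha beta : algC, alpha != beta ->
     root (charpoly2 P Q) alpha -> root (charpoly2 P Q) beta ->
     ~ (exists m : nat, (0 < m)%N /\ m.-unity_root (alpha / beta))) ->
  (0 < n)%N -> U n != 0.
Proof.
move=> Q_neq0 /charpoly2_distinct_roots[a [b [a_neq_b ra rb]]] no_unity.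
case: n => // m _; apply/negP => /eqP Um0.
have b_neq0 : b != 0.
  apply: contra Q_neq0 => /eqP b0; have := rb.
  by rewrite b0 root_charpoly2 expr0n mulr0 sub0r /= eq_sym oppr_eq0 intr_eq0.
apply: (no_unity a b a_neq_b ra rb); exists m.+1; split => //.
have /eqP a2 : a ^+ 2 == P%:~R * a - Q%:~R by rewrite -root_charpoly2.
have /eqP b2 : b ^+ 2 == P%:~R * b - Q%:~R by rewrite -root_charpoly2.
have ab_pow : a ^+ m.+1 = b ^+ m.+1.
  by rewrite (expr_lucasU a2) (expr_lucasU b2) Um0 !mul0r.
by rewrite unity_rootE exprMn exprVn ab_pow divff // expf_neq0.
Qed.
End LucasIdentities.

Section ProductsAvoidingOneIndex.
Variables k j n : nat.
Hypothesis le_kjn : (k <= j <= n)%N.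

Lemma big_nat_neq (R : Type) (idx : R) (op : Monoid.com_law idx) (F : nat -> R) :
  \big[op/idx]_(k <= i < n.+1 | i != j) F i
    = op (\big[op/idx]_(k <= i < j) F i) (\big[op/idx]_(j.+1 <= i < n.+1) F i).
Proof.
case/andP: le_kjn => le_kj le_jn.
rewrite (big_cat_nat le_kj) ?leqW // (@big_ltn_cond _ _ _ j) ?ltnS // eqxx /=.
congr (op _ _); rewrite big_nat_cond [RHS]big_nat_cond; apply: eq_bigl => i.
all: by rewrite andbT; apply: andb_idr => /andP[]; lia.
Qed.

Lemma prod_nat_neq_const (R : comNzRingType) (x : R) :
  \prod_(k <= i < n.+1 | i != j) x = x ^+ (n - k).
Proof.
case/andP: le_kjn => le_kj le_jn.
by rewrite big_nat_neq /= !prodr_const_nat -exprD; congr (_ ^+ _); lia.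
Qed.

Lemma prod_nat_neq_sign (R : comNzRingType) :
  \prod_(k <= i < n.+1 | i != j) (-1) ^+ (j < i) = (-1) ^+ (n - j) :> R.
Proof.
have lo : \prod_(k <= i < j) (-1) ^+ (j < i) = 1 :> R.
  by rewrite big_nat big1 // => i /andP[_ lt_ij]; rewrite ltnNge ltnW.
have hi : \prod_(j.+1 <= i < n.+1) (-1) ^+ (j < i) = (-1) ^+ (n - j) :> R.
  rewrite -subSS -prodr_const_nat big_nat [RHS]big_nat.
  by apply: eq_bigr => i /andP[-> _].
by rewrite big_nat_neq /= lo hi mul1r.
Qed.

Lemma prod_nat_neq_dist (R : comNzRingType) (u : nat -> R) :
  \prod_(k <= i < n.+1 | i != j) u `|i - j|%N
    = \prod_(1 <= i < (j - k).+1) u i * \prod_(1 <= i < (n - j).+1) u i.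
Proof.
case/andP: le_kjn => le_kj le_jn; rewrite big_nat_neq /=; congr (_ * _).
  rewrite big_nat_rev -{1}(add0n k) big_addn big_add1 /=.
  by apply: eq_big_nat => i /andP[_ lt_ijk]; congr u; rewrite distnEr; lia.
rewrite -[j.+1]add1n big_addn subSn //.
by apply: eq_big_nat => i _; congr u; rewrite distnEl; lia.
Qed.

Lemma mul_expr_prod_nat_neq (R : fieldType) (w : nat -> R) : w j != 0 ->
  w j ^+ (n - k) * \prod_(k <= i < n.+1 | i != j) w i
    = w j ^ ((n - k)%:Z - 1) * \prod_(k <= i < n.+1) w i.
Proof.
move=> wj_neq0; rewrite (bigD1_seq j) ?mem_index_iota ?iota_uniq ?ltnS //=.
by rewrite expfzDr // exprN1 mulrA mulfVK.
Qed.

Lemma prod_nat_neq_cross_ratio (R : fieldType) (u w : nat -> R) (c q : R) :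
  \prod_(k <= i < n.+1 | i != j)
      (c * (-1) ^+ (j < i) * q ^+ minn i j * u `|i - j|%N / (w i * w j))
  = (-1) ^+ (n - j) * c ^+ (n - k) * q ^+ fjkn j k n
    * (\prod_(1 <= i < (j - k).+1) u i * \prod_(1 <= i < (n - j).+1) u i)
    / (w j ^+ (n - k) * \prod_(k <= i < n.+1 | i != j) w i).
Proof.
rewrite prodf_div !big_split /= (prodrXr q) prod_nat_neq_sign (prod_nat_neq_dist u).
by rewrite !prod_nat_neq_const [c ^+ _ * _]mulrC [_ * w j ^+ _]mulrC.
Qed.

End ProductsAvoidingOneIndex.

Section LucasRatios.
Variables (R : fieldType) (P Q : int).
Local Notation u i := ((lucasU P Q i)%:~R : R).

Lemma intr_lucasU_cross i j : (0 < i)%N -> (0 < j)%N ->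
  u j.-1 * u i - u i.-1 * u j
    = (-1) ^+ (j < i) * Q%:~R ^+ (minn i j).-1 * u `|i - j|%N.
Proof.
move=> i_gt0 j_gt0; rewrite -!intrM -intrB lucasU_cross //.
by rewrite !rmorphM /= rmorph_sign rmorphXn.
Qed.

Lemma lucasU_ratio_subr i j : (0 < i)%N -> (0 < j)%N -> u i != 0 -> u j != 0 ->
  u j.-1 / u j - u i.-1 / u i
    = (-1) ^+ (j < i) * Q%:~R ^+ (minn i j).-1 * u `|i - j|%N / (u i * u j).
Proof.
move=> i_gt0 j_gt0 ui_neq0 uj_neq0; rewrite -intr_lucasU_cross //.
by field; rewrite ui_neq0 uj_neq0.
Qed.

Lemma lucasU_ratio_subl i j : (0 < i)%N -> (0 < j)%N -> u i.-1 != 0 -> u j.-1 != 0 ->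
  u i / u i.-1 - u j / u j.-1
    = (-1) ^+ (j < i) * Q%:~R ^+ (minn i j).-1 * u `|i - j|%N / (u i.-1 * u j.-1).
Proof.
move=> i_gt0 j_gt0 ui_neq0 uj_neq0; rewrite -intr_lucasU_cross //.
by field; rewrite ui_neq0 uj_neq0.
Qed.

End LucasRatios.

Section LucasRatioProducts.
Variables (R : numFieldType) (P Q : int) (k j n : nat).
Hypothesis U_neq0 : forall i, (0 < i)%N -> lucasU P Q i != 0.
Hypotheses (k_gt0 : (0 < k)%N) (le_kjn : (k <= j <= n)%N).
Local Notation u i := ((lucasU P Q i)%:~R : R).
Local Notation q := (Q%:~R : R).

Let u_neq0 i : (0 < i)%N -> u i != 0.
Proof. by move=> i_gt0; rewrite intr_eq0 U_neq0. Qed.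

Let lucasFactE m : (lucasFact P Q m)%:~R = \prod_(1 <= i < m.+1) u i.
Proof. by rewrite rmorph_prod. Qed.

Lemma prod_lucasU_ratio_subr (r : R) :
  \prod_(k <= i < n.+1 | i != j) (r * q * (u j.-1 / u j - u i.-1 / u i))
    = (-1) ^+ (n - j) * r ^+ (n - k) * q ^+ fjkn j k n
      * ((lucasFact P Q (j - k))%:~R * (lucasFact P Q (n - j))%:~R)
      / (u j ^ ((n - k)%:Z - 1) * \prod_(k <= i < n.+1) u i).
Proof.
have uj_neq0 : u j != 0 by apply: u_neq0; lia.
rewrite !lucasFactE -(mul_expr_prod_nat_neq le_kjn uj_neq0).
rewrite -(prod_nat_neq_cross_ratio le_kjn (fun i => u i) (fun i => u i) r q).
rewrite big_nat_cond [RHS]big_nat_cond; apply: eq_bigr => i /andP[/andP[le_ki _] _].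
have min_gt0 : (0 < minn i j)%N by lia.
rewrite lucasU_ratio_subr ?u_neq0; try lia.
by rewrite -[in RHS](prednK min_gt0) exprS; ring.
Qed.

Lemma prod_lucasU_ratio_subl (r : R) : Q != 0 -> (1 < k)%N ->
  \prod_(k <= i < n.+1 | i != j) (r * (u i / u i.-1 - u j / u j.-1))
    = (-1) ^+ (n - j) * r ^+ (n - k) * q ^ ((fjkn j k n)%:Z - (n - k)%:Z)
      * ((lucasFact P Q (j - k))%:~R * (lucasFact P Q (n - j))%:~R)
      / (u j.-1 ^ ((n - k)%:Z - 1) * \prod_(k.-1 <= i < n) u i).
Proof.
move=> Q_neq0 lt1k; have q_neq0 : q != 0 by rewrite intr_eq0.
have uj1_neq0 : u j.-1 != 0 by apply: u_neq0; lia.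
have shift : \prod_(k.-1 <= i < n) u i = \prod_(k <= i < n.+1) u i.-1.
  by rewrite -{2}(prednK k_gt0) big_add1.
have qpow : r ^+ (n - k) * q ^ ((fjkn j k n)%:Z - (n - k)%:Z)
              = (r / q) ^+ (n - k) * q ^+ fjkn j k n.
  by rewrite expfzDr // -exprnN -exprnP expr_div_n mulrAC mulrA.
rewrite !lucasFactE shift -(mul_expr_prod_nat_neq le_kjn (w := fun i => u i.-1)) //.
rewrite -[_ * r ^+ _ * _]mulrA qpow mulrA.
rewrite -(prod_nat_neq_cross_ratio le_kjn (fun i => u i) (fun i => u i.-1) (r / q) q).
rewrite big_nat_cond [RHS]big_nat_cond; apply: eq_bigr => i /andP[/andP[le_ki _] _].
have min_gt0 : (0 < minn i j)%N by lia.
have ui1_neq0 : u i.-1 != 0 by apply: u_neq0; lia.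
rewrite lucasU_ratio_subl //; try lia.
by rewrite -[in RHS](prednK min_gt0) exprS; field; rewrite uj1_neq0 ui1_neq0 q_neq0.
Qed.

End LucasRatioProducts.

Theorem lemma4 (P Q R0 R1 : int) (n k j : nat) :
  P * Q != 0 ->
  P ^+ 2 - 4 * Q != 0 ->
  0 < `|R0| + `|R1| ->
  gcdz P Q = 1%N ->
  gcdz R1 Q = 1%N ->
  (forall alpha beta : algC, alpha != beta ->
     root (charpoly2 P Q) alpha -> root (charpoly2 P Q) beta ->
     ~ (exists m : nat, (0 < m)%N /\ m.-unity_root (alpha / beta))) ->
  (0 < k)%N -> (k <= n)%N -> (k <= j <= n)%N ->
  let U (i : nat) : rat := (lucasU P Q i)%:~R in
  let F (i : nat) : rat := (lucasFact P Q i)%:~R in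
  let r0 : rat := R0%:~R in
  let r1 : rat := R1%:~R in
  let q : rat := Q%:~R in
  (\prod_(k <= i < n.+1 | i != j) (r0 * q * (U j.-1 / U j - U i.-1 / U i))
    = (-1) ^+ (n - j) * r0 ^+ (n - k) * q ^+ (fjkn j k n)
      * (F (j - k)%N * F (n - j)%N)
      / (U j ^ ((n - k)%:Z - 1) * \prod_(k <= i < n.+1) U i))
  /\
  ((2 <= k)%N ->
   \prod_(k <= i < n.+1 | i != j) (r1 * (U i / U i.-1 - U j / U j.-1))
    = (-1) ^+ (n - j) * r1 ^+ (n - k) * q ^ ((fjkn j k n)%:Z - (n - k)%:Z)
      * (F (j - k)%N * F (n - j)%N)
      / (U j.-1 ^ ((n - k)%:Z - 1) * \prod_(k.-1 <= i < n) U i)).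
Proof.
move=> PQ_neq0 D_neq0 _ _ _ no_unity k_gt0 _ le_kjn U F r0 r1 q.
have Q_neq0 : Q != 0 by move: PQ_neq0; rewrite mulf_eq0 negb_or => /andP[].
have U_neq0 i : (0 < i)%N -> lucasU P Q i != 0 by exact: lucasU_neq0.
split; first exact: prod_lucasU_ratio_subr.
by move=> lt1k; exact: prod_lucasU_ratio_subl.
Qed.
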